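(* Let $\varphi\in\Xi_p$ be such that $\lim_{x\to0}\frac{\sqrt x}{\varphi(x)}=0$. Then for every $n\in\mathbb{N}$ the map \[ \Upsilon_n:\big(C_0([0,1],G(\mathbb{R}^d)),d_\infty\big)\to\big(C_0([0,1],G(\mathbb{R}^d)),d_\varphi\big) \] is continuous.
   Context: Fix $d\geq2$, $p\in(2,3)$. $G(\mathbb{R}^d)$ is the set of $g=(g^1,g^2)\in\mathbb{R}^d\oplus(\mathbb{R}^d\otimes\mathbb{R}^d)$ whose symmetric part of $g^2$ is $\frac12g^1\otimes g^1$, with product $g\otimes h=(g^1+h^1,g^2+g^1\otimes h^1+h^2)$, identity $(0,0)=:\exp(0)$, inverse $(g^1,g^2)^{-1}=(-g^1,-g^2+g^1\otimes g^1)$; $\exp(a^1,a^2)=(a^1,a^2+\frac12a^1\otimes a^1)$ for antisymmetric $a^2$, $\exp(x):=\exp(x,0)$; dilation $\delta_\lambda\exp(a^1,a^2)=\exp(\lambda a^1,\lambda^2a^2)$; $\|g\|=\inf\{\sum_i|x^i|:x^i\in\mathbb{R}^d,\exp(x^1)\otimes\cdots\otimes\exp(x^k)=g\}$. $C_0([0,1],G(\mathbb{R}^d))$: continuous paths with $\mathbf{x}_0=\exp(0)$; $\mathbf{x}_{s,t}=\mathbf{x}_s^{-1}\otimes\mathbf{x}_t$; $d_\infty(\mathbf{x},\mathbf{y})=\sup_{0\leq s<t\leq1}\|\mathbf{x}_{s,t}^{-1}\otimes\mathbf{y}_{s,t}\|$ and $d_\varphi(\mathbf{x},\mathbf{y})=\sup_{0\leq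 s<t\leq1}\|\mathbf{x}_{s,t}^{-1}\otimes\mathbf{y}_{s,t}\|/\varphi(t-s)$. $\Xi_p$: $\varphi:[0,1]\to[0,\infty)$ with $\varphi(0)=0$ and $\varphi^p$ strictly increasing and convex. $\Upsilon_n(\mathbf{x})$ is the path with $\Upsilon_n(\mathbf{x})_{k/2^n}=\mathbf{x}_{k/2^n}$ for $k=0,\dots,2^n$ and $\Upsilon_n(\mathbf{x})_{k/2^n,\,k/2^n+t}=\delta_{2^nt}(\mathbf{x}_{k/2^n,(k+1)/2^n})$ for $t\in[0,2^{-n}]$, $k=0,\dots,2^n-1$. *)

From HB Require Import structures.
From mathcomp Require Import all_boot all_order all_algebra.
From mathcomp Require Import all_classical all_reals all_analysis.
Set Implicit Arguments. Unset Strict Implicit. Unset Printing Implicit Defensive.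
Import Order.TTheory GRing.Theory Num.Theory.
Import numFieldNormedType.Exports.
Local Open Scope classical_set_scope.
Local Open Scope ring_scope.

Section Carnot.
Variables (R : realType) (d : nat).

(* ambient space R^d (+) (R^d (x) R^d); R^d as row vectors, tensors as d x d matrices *)
Definition T2 := ('rV[R]_d * 'M[R]_d)%type.

Definition tens (a b : 'rV[R]_d) : 'M[R]_d := a^T *m b.

Definition inG (g : T2) : Prop :=
  (1 / 2%:R) *: (g.2 + g.2^T) = (1 / 2%:R) *: tens g.1 g.1 :> 'M[R]_d.

Definition gmul (g h : T2) : T2 := (g.1 + h.1, g.2 + tens g.1 h.1 + h.2).
Definition gone : T2 := (0, 0).
Definition ginv (g : T2) : T2 := (- g.1, - g.2 + tens g.1 g.1).

(* exp(a1,a2) = (a1, a2 + 1/2 a1 (x) a1) for antisymmetric a2; exp(x) := exp(x,0) *)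
Definition gexp2 (a1 : 'rV[R]_d) (a2 : 'M[R]_d) : T2 := (a1, a2 + (1 / 2%:R) *: tens a1 a1).
Definition gexp (x : 'rV[R]_d) : T2 := gexp2 x 0.

(* dilation: delta_l exp(a1,a2) = exp(l a1, l^2 a2), with a2 the antisymmetric
   part of g^2 - 1/2 g^1 (x) g^1 (i.e. log g) *)
Definition glog (g : T2) : 'rV[R]_d * 'M[R]_d := (g.1, g.2 - (1 / 2%:R) *: tens g.1 g.1).
Definition dil (l : R) (g : T2) : T2 := gexp2 (l *: (glog g).1) (l ^+ 2 *: (glog g).2).

Definition enorm (x : 'rV[R]_d) : R := Num.sqrt (\sum_(i < d) x 0 i ^+ 2).

Definition ccnorm (g : T2) : R :=
  inf [set r : R | exists xs : seq 'rV[R]_d,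
         xs != [::] /\ foldr gmul gone (map gexp xs) = g /\
         r = \sum_(x <- xs) enorm x].

(* paths are maps R -> T2, only their values on [0,1] matter *)
Definition C0path (x : R -> T2) : Prop :=
  {within `[0, 1], continuous x} /\ x 0 = gone /\
  (forall t, 0 <= t <= 1 -> inG (x t)).

Definition incr (x : R -> T2) (s t : R) : T2 := gmul (ginv (x s)) (x t).

Definition dinf (x y : R -> T2) : \bar R :=
  ereal_sup [set z | exists s t : R, 0 <= s /\ s < t /\ t <= 1 /\
     z = (ccnorm (gmul (ginv (incr x s t)) (incr y s t)))%:E].

Definition dphi (phi : R -> R) (x y : R -> T2) : \bar R :=
  ereal_sup [set z | exists s t : R, 0 <= s /\ s < t /\ t <= 1 /\
     z = (ccnorm (gmul (ginv (incr x s t)) (incr y s t)) / phi (t - s))%:E].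

Definition Xi (p : R) (phi : R -> R) : Prop :=
  phi 0 = 0 /\ (forall x, 0 <= x <= 1 -> 0 <= phi x) /\
  (forall x y, 0 <= x <= 1 -> 0 <= y <= 1 -> x < y -> phi x `^ p < phi y `^ p) /\
  (forall x y l, 0 <= x <= 1 -> 0 <= y <= 1 -> 0 <= l <= 1 ->
     phi (l * x + (1 - l) * y) `^ p <= l * phi x `^ p + (1 - l) * phi y `^ p).

(* Upsilon_n: geodesic-type interpolation on dyadic intervals.
   For t in [k/2^n,(k+1)/2^n] (k = min(floor(2^n t), 2^n - 1)),
   Upsilon_n(x)_t = x_{k/2^n} (x) delta_{2^n t - k}(x_{k/2^n,(k+1)/2^n}). *)
Definition Ups (n : nat) (x : R -> T2) (t : R) : T2 :=
  let k := minn (Num.truncn (t * 2%:R ^+ n)) (2 ^ n - 1)%N in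
  let a := k%:R / 2%:R ^+ n in
  let b := k.+1%:R / 2%:R ^+ n in
  gmul (x a) (dil (2%:R ^+ n * t - k%:R) (incr x a b)).

End Carnot.

From HB Require Import structures.
From mathcomp Require Import all_boot all_order all_algebra.
From mathcomp Require Import all_classical all_reals all_analysis.
From mathcomp Require Import ring lra zify.
Set Implicit Arguments. Unset Strict Implicit. Unset Printing Implicit Defensive.
Import Order.TTheory GRing.Theory Num.Theory.
Import numFieldNormedType.Exports.
Local Open Scope classical_set_scope.
Local Open Scope ring_scope.

(* On G(R^d) the Carnot-Caratheodory norm is equivalent to the homogeneous quasi-norm
   hnorm g = |g^1|_1 + |g^2|_1^(1/2), which is quasi-subadditive, 1-homogeneous under
   dilations, and satisfies hnorm (h^-1 e h) <= hnorm e + (2 hnorm e hnorm h)^(1/2).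
   Ups_n x only depends on x at the dyadic points j/2^n, where d_infty controls x^-1 y.
   If x^-1 y is of size tau^4 there, two conjugations, each costing a square root, make
   all increments of Ups_n x and Ups_n y O(tau)-close; this beats phi(t - s) when t - s
   is bounded below.  On a dyadic interval Ups_n z is a dilation curve, so its increments
   over [s, t] are O(sqrt (t - s)), and sqrt h = o(phi h) handles short intervals. *)

Section SqrtBounds.
Variable R : rcfType.
Implicit Types a b x y z : R.

Lemma sqrtr_le a b : 0 <= b -> a <= b ^+ 2 -> Num.sqrt a <= b.
Proof.
move=> b0 ab; apply: le_trans (ler_wsqrtr ab) _.
by rewrite sqrtr_sqr ger0_norm.
Qed.

Lemma sqrtrD3_le {x y z} : 0 <= x -> 0 <= y -> 0 <= z ->
  Num.sqrt (x + y + z) <= Num.sqrt x + Num.sqrt y + Num.sqrt z.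
Proof.
move=> x0 y0 z0; apply: sqrtr_le; first by rewrite !addr_ge0 ?sqrtr_ge0.
have := sqr_sqrtr x0; have := sqr_sqrtr y0; have := sqr_sqrtr z0.
have := sqrtr_ge0 x; have := sqrtr_ge0 y; have := sqrtr_ge0 z.
set a := Num.sqrt x; set b := Num.sqrt y; set c := Num.sqrt z.
move=> ? ? ? <- <- <-; nra.
Qed.

Lemma sqrtrD_le {x y} : 0 <= x -> 0 <= y ->
  Num.sqrt (x + y) <= Num.sqrt x + Num.sqrt y.
Proof. by move=> x0 y0; have := sqrtrD3_le x0 y0 (lexx 0); rewrite sqrtr0 !addr0. Qed.

Lemma sqrtrM_le_add {a b} : 0 <= a -> 0 <= b -> Num.sqrt (a * b) <= a + b.
Proof. by move=> a0 b0; apply: sqrtr_le; nra. Qed.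

End SqrtBounds.

Section L1Norm.
Variable R : numDomainType.

Definition l1norm {m n} (A : 'M[R]_(m, n)) : R := \sum_i \sum_j `|A i j|.

Lemma l1norm_ge0 {m n} (A : 'M[R]_(m, n)) : 0 <= l1norm A.
Proof. by apply: sumr_ge0 => i _; apply: sumr_ge0. Qed.

Lemma l1norm0 {m n} : l1norm (0 : 'M[R]_(m, n)) = 0.
Proof. by apply: big1 => i _; apply: big1 => j _; rewrite mxE normr0. Qed.

Lemma l1normD {m n} (A B : 'M[R]_(m, n)) : l1norm (A + B) <= l1norm A + l1norm B.
Proof.
rewrite /l1norm -big_split; apply: ler_sum => i _; rewrite -big_split.
by apply: ler_sum => j _; rewrite mxE ler_normD.
Qed.

Lemma l1normN {m n} (A : 'M[R]_(m, n)) : l1norm (- A) = l1norm A.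
Proof. by apply: eq_bigr => i _; apply: eq_bigr => j _; rewrite mxE normrN. Qed.

Lemma l1normB {m n} (A B : 'M[R]_(m, n)) : l1norm (A - B) <= l1norm A + l1norm B.
Proof. by rewrite -(l1normN B); apply: l1normD. Qed.

Lemma l1normZ {m n} c (A : 'M[R]_(m, n)) : l1norm (c *: A) = `|c| * l1norm A.
Proof.
rewrite /l1norm mulr_sumr; apply: eq_bigr => i _; rewrite mulr_sumr.
by apply: eq_bigr => j _; rewrite mxE normrM.
Qed.

Lemma ler_entry_l1norm {m n} (A : 'M[R]_(m, n)) i j : `|A i j| <= l1norm A.
Proof.
rewrite /l1norm (bigD1 i) //= (bigD1 j) //= -addrA lerDl.
by rewrite addr_ge0 ?sumr_ge0 // => k _; apply: sumr_ge0.
Qed.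

Lemma l1norm_row {n} (u : 'rV[R]_n) : l1norm u = \sum_j `|u 0 j|.
Proof. by rewrite /l1norm big_ord1. Qed.

Lemma l1norm_delta_row {n} (i : 'I_n) : l1norm (delta_mx 0 i : 'rV[R]_n) = 1.
Proof.
rewrite l1norm_row (bigD1 i) //= mxE !eqxx /= normr1.
by rewrite big1 ?addr0 // => k /negbTE ki; rewrite mxE ki normr0.
Qed.

End L1Norm.

Section Group.
Variables (R : realType) (d : nat).
Implicit Types (a b c e g h xs xt ys yt xa xb ya yb : T2 R d).
Local Notation gone := (@gone R d).

Lemma tensE (a b : 'rV[R]_d) i j : tens a b i j = a 0 i * b 0 j.
Proof. by rewrite /tens !mxE big_ord1 !mxE. Qed.

Lemma T2_eq g h : g.1 = h.1 -> g.2 = h.2 -> g = h.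
Proof. by case: g h => ? ? [? ?] /= -> ->. Qed.

Local Ltac mx_ring := apply/matrixP => ? ?; rewrite ?(tensE, mxE); ring.

Lemma dilE l g : dil l g = (l *: g.1, l ^+ 2 *: g.2).
Proof. by apply: T2_eq => /=; mx_ring. Qed.

Local Ltac group_ring := rewrite ?dilE; apply: T2_eq => /=; mx_ring.

Lemma gmulA g h e : gmul g (gmul h e) = gmul (gmul g h) e.
Proof. by group_ring. Qed.
Lemma gmul1g g : gmul gone g = g.
Proof. by group_ring. Qed.
Lemma gmulg1 g : gmul g gone = g.
Proof. by group_ring. Qed.
Lemma gmulgV g : gmul g (ginv g) = gone.
Proof. by group_ring. Qed.
Lemma ginv1 : ginv gone = gone.
Proof. by group_ring. Qed.
Lemma dil1 g : dil 1 g = g.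
Proof. by group_ring. Qed.
Lemma dil0 g : dil 0 g = gone.
Proof. by group_ring. Qed.

Lemma incr_cancel_l g a b : gmul (ginv (gmul g a)) (gmul g b) = gmul (ginv a) b.
Proof. by group_ring. Qed.

Lemma incr_chain a b c : gmul (ginv a) c = gmul (gmul (ginv a) b) (gmul (ginv b) c).
Proof. by group_ring. Qed.

Lemma incr_through a b c e :
  gmul (ginv b) e = gmul (ginv (gmul (ginv a) b)) (gmul (gmul (ginv a) c) (gmul (ginv c) e)).
Proof. by group_ring. Qed.

Lemma incr_dist_conj xs xt ys yt :
  gmul (ginv (gmul (ginv xs) xt)) (gmul (ginv ys) yt) =
  gmul (gmul (ginv (gmul (ginv xs) xt))
     (gmul (ginv (gmul (ginv xs) ys)) (gmul (ginv xs) xt))) (gmul (ginv xt) yt).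
Proof. by group_ring. Qed.

Lemma dil_interp_dist xa xb ya yb l :
  gmul (ginv (gmul xa (dil l (gmul (ginv xa) xb)))) (gmul ya (dil l (gmul (ginv ya) yb)))
  = gmul (gmul (ginv (dil l (gmul (ginv xa) xb)))
        (gmul (gmul (gmul (ginv xa) ya) (ginv (dil l (gmul (ginv xa) ya))))
              (dil l (gmul (ginv xa) xb))))
     (dil l (gmul (ginv xb) yb)).
Proof. by group_ring. Qed.

Lemma inGP g : inG g <-> forall i j, g.2 i j + g.2 j i = g.1 0 i * g.1 0 j.
Proof.
split=> [/matrixP G i j | G]; last by apply/matrixP => i j; rewrite !(tensE, mxE) G.
have := G i j; rewrite !(tensE, mxE); apply: mulfI.
by rewrite div1r invr_eq0 pnatr_eq0.
Qed.

Lemma inG_mul g h : inG g -> inG h -> inG (gmul g h).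
Proof.
move=> /inGP Gg /inGP Gh; apply/inGP => i j /=; rewrite !(tensE, mxE).
by have := Gg i j; have := Gh i j; lra.
Qed.

Lemma inG_inv g : inG g -> inG (ginv g).
Proof.
move=> /inGP Gg; apply/inGP => i j /=; rewrite !(tensE, mxE).
by have := Gg i j; lra.
Qed.

Lemma inG_dil l g : inG g -> inG (dil l g).
Proof.
move=> /inGP Gg; apply/inGP => i j; rewrite dilE /= !mxE -mulrDr Gg; ring.
Qed.

Lemma l1norm_tens (a b : 'rV[R]_d) : l1norm (tens a b) = l1norm a * l1norm b.
Proof.
rewrite !l1norm_row /l1norm mulr_suml; apply: eq_bigr => i _; rewrite mulr_sumr.
by apply: eq_bigr => j _; rewrite tensE normrM.
Qed.

Definition hnorm g : R := l1norm g.1 + Num.sqrt (l1norm g.2).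

Lemma hnorm_ge0 g : 0 <= hnorm g.
Proof. by rewrite addr_ge0 ?l1norm_ge0 ?sqrtr_ge0. Qed.

Lemma hnorm1 : hnorm gone = 0.
Proof. by rewrite /hnorm /= !l1norm0 sqrtr0 addr0. Qed.

Lemma l1norm1_le_hnorm g : l1norm g.1 <= hnorm g.
Proof. by rewrite lerDl sqrtr_ge0. Qed.

Lemma hnormM g h : hnorm (gmul g h) <= 2 * (hnorm g + hnorm h).
Proof.
rewrite /hnorm /=.
have h2 : l1norm (g.2 + tens g.1 h.1 + h.2) <= l1norm g.2 + l1norm g.1 * l1norm h.1 + l1norm h.2.
  by rewrite -l1norm_tens; apply: le_trans (l1normD _ _) _; rewrite lerD2r l1normD.
have := ler_wsqrtr h2.
have := sqrtrD3_le (l1norm_ge0 g.2) (mulr_ge0 (l1norm_ge0 g.1) (l1norm_ge0 h.1)) (l1norm_ge0 h.2).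
have := sqrtrM_le_add (l1norm_ge0 g.1) (l1norm_ge0 h.1).
have := l1normD g.1 h.1; have := sqrtr_ge0 (l1norm g.2); have := sqrtr_ge0 (l1norm h.2).
have := l1norm_ge0 g.1; have := l1norm_ge0 h.1.
lra.
Qed.

Lemma hnormV g : hnorm (ginv g) <= 2 * hnorm g.
Proof.
rewrite /hnorm /= l1normN.
have h2 : l1norm (- g.2 + tens g.1 g.1) <= l1norm g.2 + l1norm g.1 ^+ 2.
  by apply: le_trans (l1normD _ _) _; rewrite l1normN l1norm_tens expr2.
have := ler_wsqrtr h2; have := sqrtrD_le (l1norm_ge0 g.2) (sqr_ge0 (l1norm g.1)).
rewrite sqrtr_sqr ger0_norm ?l1norm_ge0 //.
have := sqrtr_ge0 (l1norm g.2); have := l1norm_ge0 g.1.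
lra.
Qed.

Lemma hnorm_dil l g : hnorm (dil l g) = `|l| * hnorm g.
Proof.
by rewrite dilE /hnorm /= !l1normZ sqrtrM // normrX sqrtr_sqr normr_id mulrDr.
Qed.

Lemma hnorm_dil_le l g : 0 <= l <= 1 -> hnorm (dil l g) <= hnorm g.
Proof.
by move=> /andP[l0 l1]; rewrite hnorm_dil ger0_norm // ler_piMl ?hnorm_ge0.
Qed.

Lemma hnorm_conj h e :
  hnorm (gmul (ginv h) (gmul e h)) <= hnorm e + Num.sqrt (2 * hnorm e * hnorm h).
Proof.
have -> : gmul (ginv h) (gmul e h) = (e.1, e.2 + tens e.1 h.1 - tens h.1 e.1).
  by group_ring.
set c := Num.sqrt _; rewrite /hnorm /= -[_ + _ + c]addrA lerD2l {}/c.
have h2 : l1norm (e.2 + tens e.1 h.1 - tens h.1 e.1) <= l1norm e.2 + 2 * (hnorm e * hnorm h).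
  apply: le_trans (l1normB _ _) _; apply: le_trans (lerD (l1normD _ _) (lexx _)) _.
  rewrite !l1norm_tens -addrA lerD2l.
  have := l1norm1_le_hnorm e; have := l1norm1_le_hnorm h.
  have := l1norm_ge0 e.1; have := l1norm_ge0 h.1; nra.
apply: le_trans (ler_wsqrtr h2) _; rewrite -mulrA.
apply: le_trans (sqrtrD_le (l1norm_ge0 _) _) _; last by rewrite lerD2r.
by rewrite !mulr_ge0 ?hnorm_ge0.
Qed.

(* The commutator term costs only a square root: this is where a closeness of
   order t^2 degrades to one of order t. *)
Lemma hnorm_conj_small h e t A B : 0 <= t -> 0 <= A ->
  hnorm e <= t ^+ 2 * A -> hnorm h <= B ->
  hnorm (gmul (ginv h) (gmul e h)) <= t ^+ 2 * A + t * (1 + 2 * A * B).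
Proof.
move=> t0 A0 eA hB; apply: le_trans (hnorm_conj h e) _; apply: lerD => //.
have e0 := hnorm_ge0 e; have h0 := hnorm_ge0 h.
have B0 : 0 <= B by apply: le_trans hB.
apply: sqrtr_le; first by rewrite mulr_ge0 // addr_ge0 // !mulr_ge0.
have h1 : hnorm e * hnorm h <= t ^+ 2 * A * B.
  by apply: ler_pM => //; rewrite mulr_ge0 ?sqr_ge0.
have t2 : 0 <= t ^+ 2 by apply: sqr_ge0.
have AB : 0 <= A * B by apply: mulr_ge0.
have : 2 * (t ^+ 2 * A * B) <= (t * (1 + 2 * A * B)) ^+ 2.
  rewrite exprMn -mulrA; apply: le_trans (_ : t ^+ 2 * (1 + 2 * A * B) <= _).
    by rewrite mulrCA ler_wpM2l //; lra.
  by apply: ler_wpM2l => //; nra.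
by rewrite -mulrA; nra.
Qed.

Lemma hnorm_dil_holder w l1 l2 : 0 <= l1 <= 1 -> 0 <= l2 <= 1 ->
  hnorm (gmul (ginv (dil l1 w)) (dil l2 w)) <= 2 * hnorm w * Num.sqrt `|l2 - l1|.
Proof.
move=> /andP[l10 l11] /andP[l20 l21].
have -> : gmul (ginv (dil l1 w)) (dil l2 w) =
    ((l2 - l1) *: w.1, ((l2 - l1) * (l2 + l1)) *: w.2 + (l1 * (l1 - l2)) *: tens w.1 w.1).
  by group_ring.
set D := `|l2 - l1|; set q := Num.sqrt D; set a := l1norm w.1; set X := l1norm w.2.
have D0 : 0 <= D := normr_ge0 _; have D1 : D <= 1 by rewrite /D ler_norml; lra.
have q0 : 0 <= q := sqrtr_ge0 D; have qD : q ^+ 2 = D := sqr_sqrtr D0.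
have a0 : 0 <= a := l1norm_ge0 _; have X0 : 0 <= X := l1norm_ge0 _.
have sX0 : 0 <= Num.sqrt X := sqrtr_ge0 X; have sXX : Num.sqrt X ^+ 2 = X := sqr_sqrtr X0.
have h2 : l1norm (((l2 - l1) * (l2 + l1)) *: w.2 + (l1 * (l1 - l2)) *: tens w.1 w.1)
    <= D * (2 * X + a ^+ 2).
  apply: le_trans (l1normD _ _) _; rewrite !l1normZ l1norm_tens !normrM -/a -/X.
  rewrite [`|l1 - l2|]distrC -/D !ger0_norm; try lra.
  have : 0 <= D * X by rewrite mulr_ge0.
  have : 0 <= D * a ^+ 2 by rewrite mulr_ge0 ?sqr_ge0.
  rewrite expr2; nra.
have h3 : Num.sqrt (l1norm (((l2 - l1) * (l2 + l1)) *: w.2 + (l1 * (l1 - l2)) *: tens w.1 w.1))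
    <= q * (2 * Num.sqrt X + a).
  apply: sqrtr_le; first by rewrite mulr_ge0 // addr_ge0 // mulr_ge0.
  apply: le_trans h2 _; rewrite exprMn qD ler_wpM2l //.
  have : 0 <= Num.sqrt X * a by rewrite mulr_ge0.
  move: sXX; rewrite !expr2; nra.
have h4 : D * a <= q * a by rewrite -qD ler_wpM2r // expr2 ler_piMl //; apply: sqrtr_le; lra.
by rewrite /hnorm /= l1normZ -/a -/D -/X; nra.
Qed.

End Group.

Section CCNorm.
Variables (R : realType) (d : nat).
Implicit Types (g : T2 R d) (u v : 'rV[R]_d) (xs : seq 'rV[R]_d).
Local Notation gone := (@gone R d).

Definition prod_gexp xs : T2 R d := foldr (@gmul R d) gone (map (@gexp R d) xs).
Definition word_length xs : R := \sum_(x <- xs) enorm x.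

Lemma word_length_ge0 xs : 0 <= word_length xs.
Proof. by apply: sumr_ge0 => x _; apply: sqrtr_ge0. Qed.

Lemma ccnorm_le_word_length g xs : xs != [::] -> prod_gexp xs = g ->
  ccnorm g <= word_length xs.
Proof.
move=> xs0 xsg; apply: ge_inf; last by exists xs.
by exists 0 => _ [ys [_ [_ ->]]]; apply: word_length_ge0.
Qed.

Lemma prod_gexp_cons x xs : prod_gexp (x :: xs) = gmul (gexp x) (prod_gexp xs).
Proof. by []. Qed.

Lemma prod_gexp_cat xs ys : prod_gexp (xs ++ ys) = gmul (prod_gexp xs) (prod_gexp ys).
Proof. by elim: xs => [|x xs IH] /=; rewrite ?gmul1g // -gmulA -IH. Qed.

Lemma prod_gexp_commutator a b :
  prod_gexp [:: a; b; - a; - b] = (0, tens a b - tens b a).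
Proof. by apply: T2_eq => /=; apply/matrixP => ? ?; rewrite ?(tensE, mxE); field. Qed.

Lemma prod_gexp_flatten_central (I : Type) (w : I -> seq 'rV[R]_d) (B : I -> 'M[R]_d) s :
  (forall i, prod_gexp (w i) = (0, B i)) ->
  prod_gexp (flatten (map w s)) = (0, \sum_(i <- s) B i).
Proof.
move=> wB; elim: s => [|i s IH] /=; first by rewrite big_nil.
rewrite prod_gexp_cat IH wB big_cons; apply: T2_eq => /=; first by rewrite addr0.
by apply/matrixP => ? ?; rewrite ?(tensE, mxE); ring.
Qed.

Lemma enorm_le_l1norm u : enorm u <= l1norm u.
Proof.
apply: sqrtr_le; first exact: l1norm_ge0.
rewrite expr2 {1}l1norm_row mulr_suml; apply: ler_sum => k _.
by rewrite -[_ ^+ 2]ger0_norm ?sqr_ge0 // normrX expr2 ler_wpM2l ?ler_entry_l1norm.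
Qed.

Lemma l1norm_le_enorm u : l1norm u <= d%:R * enorm u.
Proof.
rewrite l1norm_row; apply: (@le_trans _ _ (\sum_(k < d) enorm u)).
  apply: ler_sum => k _; rewrite -sqrtr_sqr; apply: ler_wsqrtr.
  by rewrite (bigD1 k) //= lerDl; apply: sumr_ge0 => i _; apply: sqr_ge0.
by rewrite sumr_const card_ord mulr_natl.
Qed.

Lemma enormN u : enorm (- u) = enorm u.
Proof. by congr Num.sqrt; apply: eq_bigr => i _; rewrite mxE sqrrN. Qed.

Lemma enorm_scale_delta (k : R) (i : 'I_d) : enorm (k *: delta_mx 0 i) <= `|k|.
Proof. by apply: le_trans (enorm_le_l1norm _) _; rewrite l1normZ l1norm_delta_row mulr1. Qed.

Lemma tensZ (a b : R) u v : tens (a *: u) (b *: v) = (a * b) *: tens u v.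
Proof. by apply/matrixP => ? ?; rewrite !(tensE, mxE); ring. Qed.

Lemma tens_delta (i j : 'I_d) : tens (delta_mx 0 i) (delta_mx 0 j) = delta_mx i j :> 'M[R]_d.
Proof. by rewrite /tens trmx_delta mul_delta_mx. Qed.

Section CommutatorWord.
Variable A : 'M[R]_d.

Let half_entry (p : 'I_d * 'I_d) := A p.1 p.2 / 2.
Let root p := Num.sqrt `|half_entry p|.

(* [exp(a e_i), exp(b e_j)] with a b = A_ij / 2 contributes (A_ij/2) (e_ij - e_ji). *)
Let u p : 'rV[R]_d := root p *: delta_mx 0 p.1.
Let v p : 'rV[R]_d := (Num.sg (half_entry p) * root p) *: delta_mx 0 p.2.

Definition comm_word : seq 'rV[R]_d :=
  flatten [seq [:: u p; v p; - u p; - v p] | p <- index_enum ('I_d * 'I_d)%type].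

Lemma prod_comm_word : prod_gexp comm_word = (0, (1 / 2) *: (A - A^T)).
Proof.
rewrite (prod_gexp_flatten_central
  (B := fun p => half_entry p *: (delta_mx p.1 p.2 - delta_mx p.2 p.1))); last first.
  move=> p; rewrite prod_gexp_commutator; congr (_, _).
  have sq : Num.sg (half_entry p) * root p * root p = half_entry p.
    by rewrite -mulrA -expr2 sqr_sqrtr // -numEsg.
  by rewrite /u /v !tensZ !tens_delta mulrC sq scalerBr.
have half_sum : \sum_(p <- index_enum ('I_d * 'I_d)%type) half_entry p *: delta_mx p.1 p.2
    = (1 / 2) *: A.
  rewrite [in RHS](matrix_sum_delta A).
  rewrite -(pair_big xpredT xpredT (fun i j => half_entry (i, j) *: delta_mx i j)) /=.
  rewrite scaler_sumr; apply: eq_bigr => i _; rewrite scaler_sumr; apply: eq_bigr => j _.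
  by rewrite scalerA mulrC div1r.
congr (_, _); transitivity ((1 / 2) *: A - ((1 / 2) *: A)^T); last first.
  by rewrite linearZ /= scalerBr.
rewrite -half_sum linear_sum -sumrB; apply: eq_bigr => p _.
by rewrite linearZ /= trmx_delta scalerBr.
Qed.

Lemma comm_word_length : word_length comm_word <= 4 * (d * d)%:R * Num.sqrt (l1norm A).
Proof.
rewrite /word_length big_flatten /= big_map.
apply: le_trans (_ : \sum_(p : 'I_d * 'I_d) 4 * Num.sqrt (l1norm A) <= _); last first.
  by rewrite sumr_const card_prod !card_ord -[_ *+ (d * d)]mulr_natr natrM mulrAC.
apply: ler_sum => p _; rewrite !big_cons big_nil addr0 !enormN /u /v.
have root_le : root p <= Num.sqrt (l1norm A).
  apply: ler_wsqrtr; apply: le_trans (ler_entry_l1norm A p.1 p.2).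
  rewrite /half_entry normrM ler_piMr // normfV ger0_norm // invf_le1 //.
  by rewrite ler1n.
have sg_root : `|Num.sg (half_entry p) * root p| <= root p.
  rewrite normrM normr_sg ger0_norm ?sqrtr_ge0 //.
  by case: (_ != 0); rewrite /= ?mul1r ?mul0r ?sqrtr_ge0.
have r0 : `|root p| = root p by rewrite ger0_norm ?sqrtr_ge0.
have := enorm_scale_delta (root p) p.1.
have := enorm_scale_delta (Num.sg (half_entry p) * root p) p.2.
rewrite r0; lra.
Qed.

End CommutatorWord.

(* In G, g^2 = 1/2 g^1 (x) g^1 + its antisymmetric part, so g = exp(g^1) * (0, antisym g^2). *)
Lemma prod_gexp_decomposition g : inG g -> prod_gexp (g.1 :: comm_word g.2) = g.
Proof.
move=> /inGP G; rewrite prod_gexp_cons prod_comm_word.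
apply: T2_eq => /=; first by rewrite addr0.
apply/matrixP => i j; rewrite !(tensE, mxE) mulr0 addr0.
by have := G i j; lra.
Qed.

Lemma ccnorm_le_hnorm g : inG g -> ccnorm g <= (1 + 4 * (d * d)%:R) * hnorm g.
Proof.
move=> Gg; apply: le_trans (ccnorm_le_word_length _ (prod_gexp_decomposition Gg)) _ => //.
rewrite /word_length big_cons -/(word_length _).
have := enorm_le_l1norm g.1; have := comm_word_length g.2.
have := l1norm_ge0 g.1; have := sqrtr_ge0 (l1norm g.2).
have : 0 <= (d * d)%:R :> R by [].
rewrite /hnorm; nra.
Qed.

Lemma hnorm_prod_gexp xs :
  l1norm (prod_gexp xs).1 <= d%:R * word_length xs /\
  l1norm (prod_gexp xs).2 <= (d%:R * word_length xs) ^+ 2.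
Proof.
elim: xs => [|x xs [IH1 IH2]]; first by rewrite /= !l1norm0 /word_length big_nil mulr0 expr0n.
rewrite prod_gexp_cons /word_length big_cons -/(word_length _).
move: IH1 IH2; set h := prod_gexp xs; set L := word_length xs => IH1 IH2.
have L0 : 0 <= L := word_length_ge0 xs.
have nx := l1norm_le_enorm x; have nx0 := l1norm_ge0 x.
have nh0 := l1norm_ge0 h.1; have e0 : 0 <= enorm x := sqrtr_ge0 _.
have D0 : 0 <= d%:R :> R by [].
split; first by apply: le_trans (l1normD _ _) _; lra.
have s2 : l1norm (0 + (1 / 2) *: tens x x + tens x h.1 + h.2) <=
    l1norm x * l1norm x + l1norm x * l1norm h.1 + l1norm h.2.
  apply: le_trans (l1normD _ _) _; rewrite lerD2r.
  apply: le_trans (l1normD _ _) _; rewrite add0r l1normZ !l1norm_tens lerD2r.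
  by rewrite ler_piMl ?mulr_ge0 // ger0_norm //; lra.
apply: le_trans s2 _.
have t1 : l1norm x * l1norm x <= (d%:R * enorm x) ^+ 2 by rewrite expr2 ler_pM.
have t2 : l1norm x * l1norm h.1 <= (d%:R * enorm x) * (d%:R * L) by rewrite ler_pM.
have : 0 <= d%:R * enorm x * (d%:R * L) by rewrite !mulr_ge0.
lra.
Qed.

Lemma hnorm_le_ccnorm g : inG g -> hnorm g <= 2 * d.+1%:R * ccnorm g.
Proof.
move=> Gg; have D0 : 0 < 2 * d.+1%:R :> R by rewrite mulr_gt0.
rewrite -ler_pdivrMl //; apply: lb_le_inf.
  by exists (word_length (g.1 :: comm_word g.2)), (g.1 :: comm_word g.2); split=> //;
     split=> //; apply: prod_gexp_decomposition.
move=> _ [xs [_ [xsg ->]]]; rewrite ler_pdivrMl //.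
have [h1 h2] := hnorm_prod_gexp xs; rewrite /prod_gexp xsg in h1 h2.
have L0 := word_length_ge0 xs.
have h3 : Num.sqrt (l1norm g.2) <= d%:R * word_length xs by rewrite sqrtr_le ?mulr_ge0.
have : d%:R * word_length xs <= d.+1%:R * word_length xs by rewrite ler_wpM2r // ler_nat.
rewrite /hnorm -/(word_length xs); lra.
Qed.

End CCNorm.

Definition dyad {R : realType} (n j : nat) : R := j%:R / 2%:R ^+ n.

Section Dyadic.
Variables (R : realType) (d n : nat).
Implicit Types (z : R -> T2 R d) (s t : R).
Local Notation N := (2%:R ^+ n : R).

Local Notation dyad := (@dyad R n).

Lemma N_gt0 : 0 < N.
Proof. by rewrite exprn_gt0. Qed.

Lemma dyad_ge0 j : 0 <= dyad j.
Proof. by rewrite divr_ge0 // ltW // N_gt0. Qed.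

Lemma dyad_le1 j : (j <= 2 ^ n)%N -> dyad j <= 1.
Proof. by move=> jN; rewrite ler_pdivrMr ?N_gt0 // mul1r -natrX ler_nat. Qed.

Lemma dyad_max : dyad (2 ^ n) = 1.
Proof. by rewrite /dyad natrX divff // expf_neq0. Qed.

Lemma dyadS j : dyad j.+1 = dyad j + N^-1.
Proof. by rewrite /dyad -natr1 mulrDl mul1r. Qed.

Lemma dyad_leE j t : (dyad j <= t) = (j%:R <= N * t).
Proof. by rewrite ler_pdivrMr ?N_gt0 // mulrC. Qed.

Lemma le_dyadE j t : (t <= dyad j) = (N * t <= j%:R).
Proof. by rewrite ler_pdivlMr ?N_gt0 // mulrC. Qed.

Lemma dyadic_cover t : 0 <= t <= 1 ->
  exists2 j, (j < 2 ^ n)%N & dyad j <= t <= dyad j.+1.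
Proof.
move=> /andP[t0 t1]; have Nt0 : 0 <= N * t by rewrite mulr_ge0 // ltW // N_gt0.
have /andP[T1 T2] := truncn_itv Nt0; have N0 : (0 < 2 ^ n)%N by rewrite expn_gt0.
case: (ltnP (Num.truncn (N * t)) (2 ^ n)) => TN.
  by exists (Num.truncn (N * t)) => //; rewrite dyad_leE le_dyadE T1 ltW.
exists (2 ^ n).-1; first by rewrite prednK // ltnSn.
rewrite prednK // dyad_leE le_dyadE natrX ler_piMr ?exprn_ge0 // andbT.
by apply: le_trans T1; rewrite ler_nat; lia.
Qed.

Lemma dilation_param_in j t : dyad j <= t <= dyad j.+1 -> 0 <= N * t - j%:R <= 1.
Proof. by rewrite dyad_leE le_dyadE -natr1 => /andP[h1 h2]; apply/andP; split; lra. Qed.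

Lemma Ups_dyadic z j t : (j < 2 ^ n)%N -> dyad j <= t <= dyad j.+1 ->
  Ups n z t = gmul (z (dyad j)) (dil (N * t - j%:R) (incr z (dyad j) (dyad j.+1))).
Proof.
move=> jN /andP[]; rewrite dyad_leE le_dyadE => h1 h2.
rewrite /Ups -!/(dyad _) [t * N]mulrC.
have [lt|ge] := ltP (N * t) j.+1%:R.
  by rewrite (@truncn_def _ _ j) ?h1 // (minn_idPl _) //; lia.
have E : N * t = j.+1%:R by apply: le_anti; rewrite h2 ge.
rewrite E (@truncn_def _ _ j.+1) ?lexx ?ltr_nat ?ltnSn //.
have [jN'|jN'] := ltnP j.+1 (2 ^ n); last first.
  by rewrite (minn_idPr _); [have -> : (2 ^ n - 1)%N = j by lia | lia].
rewrite (minn_idPl _); last by lia.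
rewrite subrr dil0 -natr1 addrC addKr dil1 /incr.
by rewrite gmulg1 gmulA gmulgV gmul1g.
Qed.

Lemma Ups_inG z t : (forall j, (j <= 2 ^ n)%N -> inG (z (dyad j))) -> 0 <= t <= 1 ->
  inG (Ups n z t).
Proof.
move=> zG /dyadic_cover[j jN hj]; rewrite (Ups_dyadic z jN hj).
have zjG := zG _ (ltnW jN).
by apply: inG_mul => //; apply/inG_dil/inG_mul; [apply: inG_inv | apply: zG].
Qed.

Lemma Ups_incr_within z V j s t : (j < 2 ^ n)%N ->
  hnorm (incr z (dyad j) (dyad j.+1)) <= V ->
  dyad j <= s -> s <= t -> t <= dyad j.+1 ->
  hnorm (incr (Ups n z) s t) <= 2 * V * Num.sqrt (N * (t - s)).
Proof.
move=> jN zV js st tj.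
have hs : dyad j <= s <= dyad j.+1 by rewrite js (le_trans st tj).
have ht : dyad j <= t <= dyad j.+1 by rewrite tj (le_trans js st).
rewrite /incr (Ups_dyadic z jN hs) (Ups_dyadic z jN ht) incr_cancel_l.
apply: le_trans (hnorm_dil_holder _ (dilation_param_in hs) (dilation_param_in ht)) _.
have -> : N * t - j%:R - (N * s - j%:R) = N * (t - s) by ring.
rewrite ger0_norm ?mulr_ge0 ?subr_ge0 ?(ltW N_gt0) //.
by rewrite ler_wpM2r ?sqrtr_ge0 // ler_wpM2l.
Qed.

(* An interval of length at most 1/N meets at most two dyadic intervals. *)
Lemma Ups_incr_holder z V s t :
  (forall j, (j < 2 ^ n)%N -> hnorm (incr z (dyad j) (dyad j.+1)) <= V) ->
  0 <= s -> s <= t -> t <= 1 -> t - s <= N^-1 ->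
  hnorm (incr (Ups n z) s t) <= 8 * V * Num.sqrt (N * (t - s)).
Proof.
move=> zV s0 st t1 tsN.
have V0 : 0 <= V by apply: le_trans (zV 0%N _); rewrite ?hnorm_ge0 ?expn_gt0.
have S0 : 0 <= V * Num.sqrt (N * (t - s)) by rewrite mulr_ge0 ?sqrtr_ge0.
have piece j a b : (j < 2 ^ n)%N -> dyad j <= a -> a <= b -> b <= dyad j.+1 ->
    s <= a -> b <= t -> hnorm (incr (Ups n z) a b) <= 2 * V * Num.sqrt (N * (t - s)).
  move=> jN ja ab bj sa bt; apply: le_trans (Ups_incr_within jN (zV j jN) ja ab bj) _.
  rewrite ler_wpM2l ?mulr_ge0 //; apply: ler_wsqrtr.
  by rewrite ler_wpM2l ?(ltW N_gt0) //; lra.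
have [j jN /andP[js sj]] : exists2 j, (j < 2 ^ n)%N & dyad j <= s <= dyad j.+1.
  by apply: dyadic_cover; rewrite s0 (le_trans st t1).
have [tj|jt] := leP t (dyad j.+1).
  by apply: le_trans (piece j s t jN js st tj (lexx s) (lexx t)) _; lra.
have jN' : (j.+1 < 2 ^ n)%N.
  rewrite ltn_neqAle jN andbT; apply: contraTneq jt => ->.
  by rewrite dyad_max -leNgt.
have tj2 : t <= dyad j.+2 by rewrite dyadS; have := dyadS j; lra.
rewrite /incr (incr_chain _ (Ups n z (dyad j.+1))) -!/(incr _ _ _).
apply: le_trans (hnormM _ _) _.
have h1 := piece j s (dyad j.+1) jN js sj (lexx _) (lexx s) (ltW jt).
have h2 := piece j.+1 (dyad j.+1) t jN' (lexx _) (ltW jt) tj2 sj (lexx t).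
move: (hnorm _) (hnorm _) h1 h2 => a b h1 h2; lra.
Qed.

End Dyadic.

Definition incr_dist (R : realType) (d : nat) (x y : R -> T2 R d) (s t : R) : T2 R d :=
  gmul (ginv (incr x s t)) (incr y s t).

Section Comparison.
Variables (R : realType) (d n : nat) (x y : R -> T2 R d) (M tau : R).
Hypothesis M0 : 0 <= M.
Hypothesis x_bound : forall j, (j <= 2 ^ n)%N -> hnorm (x (dyad n j)) <= M.
Hypothesis tau01 : 0 <= tau <= 1.
Hypothesis xy_close : forall j, (j <= 2 ^ n)%N ->
  hnorm (gmul (ginv (x (dyad n j))) (y (dyad n j))) <= tau ^+ 4.
Local Notation N := (2%:R ^+ n : R).
Local Notation step z j := (incr z (dyad n j) (dyad n j.+1)).

Lemma hnorm_step_x j : (j < 2 ^ n)%N -> hnorm (step x j) <= 6 * M.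
Proof.
move=> jN; apply: le_trans (hnormM _ _) _.
have := hnormV (x (dyad n j)); have := x_bound (ltnW jN); have := x_bound jN.
move: (hnorm _) (hnorm _) (hnorm _) => a b c; lra.
Qed.

Lemma hnorm_Ups_x t : 0 <= t <= 1 -> hnorm (Ups n x t) <= 14 * M.
Proof.
move=> /(dyadic_cover n)[j jN hj]; rewrite (Ups_dyadic x jN hj).
apply: le_trans (hnormM _ _) _.
have := hnorm_dil_le (step x j) (dilation_param_in hj).
have := hnorm_step_x jN; have := x_bound (ltnW jN).
move: (hnorm _) (hnorm _) (hnorm _) => a b c; lra.
Qed.

Lemma hnorm_step_y j : (j < 2 ^ n)%N -> hnorm (step y j) <= 8 + 24 * M.
Proof.
move=> jN; rewrite /incr (incr_through (x (dyad n j)) _ (x (dyad n j.+1))) -/(incr x _ _).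
apply: le_trans (hnormM _ _) _.
have := hnormV (gmul (ginv (x (dyad n j))) (y (dyad n j))).
have := hnormM (step x j) (gmul (ginv (x (dyad n j.+1))) (y (dyad n j.+1))).
have := xy_close (ltnW jN); have := xy_close jN; have := hnorm_step_x jN.
have := exprn_ile1 4 (andP tau01).1 (andP tau01).2.
move: (hnorm _) (hnorm _) (hnorm _) (hnorm _) (hnorm _) => a b c e f; lra.
Qed.

Lemma hnorm_Ups_dist t : 0 <= t <= 1 ->
  hnorm (gmul (ginv (Ups n x t)) (Ups n y t)) <= tau ^+ 2 * (16 + 144 * M).
Proof.
move=> /(dyadic_cover n)[j jN hj].
rewrite (Ups_dyadic x jN hj) (Ups_dyadic y jN hj) /incr dil_interp_dist.
have l01 := dilation_param_in hj; move: (N * t - j%:R) l01 => l l01.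
have hv := hnorm_step_x jN; have hea := xy_close (ltnW jN); have heb := xy_close jN.
move: hv hea heb; rewrite /incr.
move: (gmul (ginv (x (dyad n j))) (x (dyad n j.+1))) (gmul (ginv (x (dyad n j))) (y (dyad n j)))
  (gmul (ginv (x (dyad n j.+1))) (y (dyad n j.+1))) => v ea eb hv hea heb.
have t4 : (tau ^+ 2) ^+ 2 = tau ^+ 4 by rewrite -exprM.
have hf : hnorm (gmul ea (ginv (dil l ea))) <= (tau ^+ 2) ^+ 2 * 6.
  apply: le_trans (hnormM _ _) _.
  have := hnormV (dil l ea); have := hnorm_dil_le ea l01.
  move: hea; move: (hnorm _) (hnorm _) (hnorm _) => a b c; lra.
have hc := hnorm_conj_small (sqr_ge0 tau) (ler0n _ 6) hf
  (le_trans (hnorm_dil_le v l01) hv).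
have heb' := le_trans (hnorm_dil_le eb l01) heb.
apply: le_trans (hnormM _ _) _.
have t42 : tau ^+ 4 <= tau ^+ 2.
  by case/andP: tau01 => t0 t1; rewrite -t4 [X in X <= _]expr2 ler_piMr ?sqr_ge0 // exprn_ile1.
have t2 : 0 <= tau ^+ 2 * M by rewrite mulr_ge0 ?sqr_ge0.
move: hc heb'; move: (hnorm _) (hnorm _) => a b; nra.
Qed.

Lemma hnorm_incr_dist_large s t : 0 <= s <= 1 -> 0 <= t <= 1 ->
  hnorm (incr_dist (Ups n x) (Ups n y) s t) <=
    (2 + 6 * (16 + 144 * M) + 672 * (16 + 144 * M) * M) * tau.
Proof.
move=> hs ht; rewrite /incr_dist /incr incr_dist_conj.
have hDs := hnorm_Ups_dist hs; have hDt := hnorm_Ups_dist ht.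
have hXs := hnorm_Ups_x hs; have hXt := hnorm_Ups_x ht.
have A0 : 0 <= 16 + 144 * M by rewrite addr_ge0 ?mulr_ge0.
move: hDs hDt A0; move: (16 + 144 * M) => A hDs hDt A0.
move: (Ups n x s) (Ups n x t) (Ups n y s) (Ups n y t) hDs hDt hXs hXt.
move=> Xs Xt Ys Yt hDs hDt hXs hXt.
have hX : hnorm (gmul (ginv Xs) Xt) <= 84 * M.
  apply: le_trans (hnormM _ _) _; have := hnormV Xs.
  by move: hXs hXt; move: (hnorm _) (hnorm _) (hnorm _) => a b c; lra.
have hDsV : hnorm (ginv (gmul (ginv Xs) Ys)) <= tau ^+ 2 * (2 * A).
  by apply: le_trans (hnormV _) _; rewrite mulrCA ler_pM2l.
have [t0 t1] := andP tau01.
have hc := hnorm_conj_small t0 (mulr_ge0 (ler0n _ 2) A0) hDsV hX.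
apply: le_trans (hnormM _ _) _.
have tt : tau ^+ 2 * A <= tau * A.
  by rewrite ler_wpM2r // expr2 ler_piMr.
by move: hc hDt; move: (hnorm _) (hnorm _) => a b; nra.
Qed.

Lemma hnorm_incr_dist_small s t : 0 <= s -> s <= t -> t <= 1 -> t - s <= N^-1 ->
  hnorm (incr_dist (Ups n x) (Ups n y) s t) <= 48 * (8 + 24 * M) * Num.sqrt (N * (t - s)).
Proof.
move=> s0 st t1 tsN.
have hVx j : (j < 2 ^ n)%N -> hnorm (step x j) <= 8 + 24 * M.
  move=> jN; apply: le_trans (hnorm_step_x jN) _.
  by rewrite ler_wpDl // ler_wpM2r // ler_nat.
have hX := Ups_incr_holder hVx s0 st t1 tsN.
have hY := Ups_incr_holder hnorm_step_y s0 st t1 tsN.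
rewrite /incr_dist; apply: le_trans (hnormM _ _) _.
have := hnormV (incr (Ups n x) s t).
by move: hX hY; move: (hnorm _) (hnorm _) (hnorm _) (Num.sqrt _) => a b c S; lra.
Qed.

End Comparison.

Lemma ubound_nat_ge0 (R : numDomainType) (f : nat -> R) m : (forall j, 0 <= f j) ->
  exists2 M, 0 <= M & forall j, (j <= m)%N -> f j <= M.
Proof.
move=> f0; exists (\sum_(j < m.+1) f j); first exact: sumr_ge0.
move=> j jm; rewrite (bigD1 (Ordinal (jm : (j < m.+1)%N))) //= lerDl.
exact: sumr_ge0.
Qed.

Lemma ler_mul_frac (R : realFieldType) (A u v eps : R) : 0 <= A -> 0 < eps -> 0 <= v ->
  u <= eps / (2 * (A + 1)) * v -> A * u <= eps / 2 * v.
Proof.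
move=> A0 eps0 v0 uv; apply: le_trans (ler_wpM2l A0 uv) _.
have A1 : 0 < A + 1 by rewrite ltr_wpDl.
have -> : A * (eps / (2 * (A + 1)) * v) = A / (A + 1) * (eps / 2 * v).
  by field; rewrite lt0r_neq0.
by rewrite ler_piMl ?mulr_ge0 ?divr_ge0 ?(ltW eps0) // ler_pdivrMr // mul1r lerDl.
Qed.

Section Distances.
Variables (R : realType) (d : nat).
Implicit Types (x y : R -> T2 R d) (phi : R -> R).

Lemma hnorm_le_dinf x y t del : C0path x -> C0path y -> 0 <= del -> 0 <= t <= 1 ->
  (dinf x y < del%:E)%E -> hnorm (gmul (ginv (x t)) (y t)) <= 2 * d.+1%:R * del.
Proof.
move=> [_ [x0 xG]] [_ [y0 yG]] del0 /andP[t0 t1] dxy.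
have [<-|t_gt0] := eqVneq 0 t.
  by rewrite x0 y0 ginv1 gmul1g hnorm1 mulr_ge0.
have t_pos : 0 < t by rewrite lt_neqAle t_gt0.
have tI : 0 <= t <= 1 by rewrite t0.
apply: le_trans (hnorm_le_ccnorm (inG_mul (inG_inv (xG t tI)) (yG t tI))) _.
rewrite ler_wpM2l // ltW // -lte_fin; apply: le_lt_trans dxy.
apply: ereal_sup_ubound; exists 0, t; do !split => //.
by rewrite /incr x0 y0 ginv1 !gmul1g.
Qed.

Lemma dphi_le phi x y c : (forall h, 0 < h <= 1 -> 0 < phi h) ->
  (forall s t, 0 <= s -> s < t -> t <= 1 -> ccnorm (incr_dist x y s t) <= c * phi (t - s)) ->
  (dphi phi x y <= c%:E)%E.
Proof.
move=> phi_gt0 H; apply: ge_ereal_sup => _ [s [t [s0 [st [t1 ->]]]]].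
rewrite lee_fin ler_pdivrMr ?H // phi_gt0 // subr_gt0 st /=; lra.
Qed.

Lemma Xi_gt0 p phi : 0 < p -> Xi p phi -> forall h, 0 < h <= 1 -> 0 < phi h.
Proof.
move=> p0 [phi0 [phi_ge0 [phi_incr _]]] h /andP[h0 h1].
have := phi_incr 0 h; rewrite lexx ler01 ltW // h1 phi0 powR0 ?gt_eqF // => /(_ isT isT h0) pos.
rewrite lt_neqAle phi_ge0 ?andbT; last by rewrite ltW // h1.
apply/eqP => E.
by rewrite -E powR0 ?gt_eqF ?ltxx in pos.
Qed.

Lemma Xi_le p phi : 0 < p -> Xi p phi -> forall a b, 0 <= a -> a <= b -> b <= 1 ->
  phi a <= phi b.
Proof.
move=> p0 [_ [phi_ge0 [phi_incr _]]] a b a0 ab b1.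
have [<-//|neq] := eqVneq a b.
have aI : 0 <= a <= 1 by rewrite a0 (le_trans ab b1).
have bI : 0 <= b <= 1 by rewrite (le_trans a0 ab) b1.
have := phi_incr a b aI bI; rewrite lt_neqAle neq ab => /(_ isT).
rewrite leNgt; apply: contraTN => ba; rewrite -leNgt.
by rewrite ge0_ler_powR ?ltW ?nnegrE ?phi_ge0.
Qed.

Lemma sqrt_le_near0 phi c b : (forall h, 0 < h <= 1 -> 0 < phi h) ->
  (fun h => Num.sqrt h / phi h) h @[h --> 0^'+] --> 0 -> 0 < c -> 0 < b -> b <= 1 ->
  exists2 eta, 0 < eta <= b & forall h, 0 < h <= eta -> Num.sqrt h <= c * phi h.
Proof.
move=> phi_gt0 lim0 c0 b0 b1.
have [e /= e0 He] := @cvgr_dist_lt R R^o _ _ _ _ 0 lim0 c c0.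
exists (Num.min (e / 2) b).
  by apply/andP; split; [rewrite lt_min divr_gt0 | rewrite ge_min lexx orbT].
move=> h /andP[h0]; rewrite le_min => /andP[he hb].
have phih : 0 < phi h by rewrite phi_gt0 // h0 (le_trans hb b1).
rewrite -ler_pdivrMr //.
have hball : ball (0 : R) e h.
  by rewrite /ball /= sub0r normrN ger0_norm ?(ltW h0) //; lra.
have := He h hball h0; rewrite sub0r normrN ger0_norm ?divr_ge0 ?sqrtr_ge0 ?(ltW phih) //.
exact: ltW.
Qed.

End Distances.

Lemma C0path_dyadic_inG (R : realType) (d n : nat) (z : R -> T2 R d) : C0path z ->
  forall j, (j <= 2 ^ n)%N -> inG (z (dyad n j)).
Proof. by move=> [_ [_ zG]] j jn; apply: zG; rewrite dyad_ge0 dyad_le1. Qed.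

Lemma incr_dist_Ups_inG (R : realType) (d n : nat) (x y : R -> T2 R d) s t :
  C0path x -> C0path y -> 0 <= s <= 1 -> 0 <= t <= 1 ->
  inG (incr_dist (Ups n x) (Ups n y) s t).
Proof.

move=> /(C0path_dyadic_inG (n := n)) xG /(C0path_dyadic_inG (n := n)) yG hs ht.
by apply: inG_mul; [apply: inG_inv|]; apply: inG_mul; try apply: inG_inv;
  apply: Ups_inG.
Qed.

Lemma Ups_incr_dist_bounds (R : realType) (d n : nat) (x : R -> T2 R d) : C0path x ->
  exists A B : R, [/\ 0 <= A, 0 <= B & forall y tau s t, C0path y -> 0 < tau <= 1 ->
    (dinf x y < (tau ^+ 4 / (2 * d.+1%:R))%:E)%E -> 0 <= s -> s < t -> t <= 1 ->
    ccnorm (incr_dist (Ups n x) (Ups n y) s t) <= B * tau /\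
    (t - s <= (2%:R ^+ n)^-1 ->
       ccnorm (incr_dist (Ups n x) (Ups n y) s t) <= A * Num.sqrt (t - s))].
Proof.

move=> Cx; have [M M0 xM] := ubound_nat_ge0 (f := fun j => hnorm (x (dyad n j)))
  (2 ^ n) (fun j => hnorm_ge0 _).
have K0 : 0 <= 1 + 4 * (d * d)%:R :> R by rewrite addr_ge0 ?mulr_ge0.
exists ((1 + 4 * (d * d)%:R) * (48 * (8 + 24 * M) * Num.sqrt (2%:R ^+ n))),
       ((1 + 4 * (d * d)%:R) * (2 + 6 * (16 + 144 * M) + 672 * (16 + 144 * M) * M)).
have V0 : 0 <= 8 + 24 * M by rewrite addr_ge0 ?mulr_ge0.
have W0 : 0 <= 16 + 144 * M by rewrite addr_ge0 ?mulr_ge0.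
split=> [||y tau s t Cy /andP[tau0 tau1] dxy s0 st t1].
- exact: (mulr_ge0 K0 (mulr_ge0 (mulr_ge0 (ler0n _ 48) V0) (sqrtr_ge0 _))).
- apply: (mulr_ge0 K0); apply: addr_ge0; last exact: mulr_ge0 (mulr_ge0 (ler0n _ 672) W0) M0.
  exact: addr_ge0 (ler0n _ 2) (mulr_ge0 (ler0n _ 6) W0).
have D0 : 0 < 2 * d.+1%:R :> R by rewrite mulr_gt0.
have tau01 : 0 <= tau <= 1 by rewrite ltW.
have close j : (j <= 2 ^ n)%N ->
    hnorm (gmul (ginv (x (dyad n j))) (y (dyad n j))) <= tau ^+ 4.
  move=> jn; have del0 := divr_ge0 (exprn_ge0 4 (ltW tau0)) (ltW D0).
  have tI : 0 <= (dyad n j : R) <= 1 by rewrite dyad_ge0 dyad_le1.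
  have := hnorm_le_dinf Cx Cy del0 tI dxy.
  by rewrite [X in _ <= X]mulrC divfK; last exact: lt0r_neq0.
have hs : 0 <= s <= 1 by rewrite s0 (le_trans (ltW st)).
have ht : 0 <= t <= 1 by rewrite t1 (le_trans s0 (ltW st)).
have KG := ccnorm_le_hnorm (incr_dist_Ups_inG n Cx Cy hs ht).
split.
  apply: le_trans KG _; apply: le_trans (ler_wpM2l K0 _) _.
    exact (hnorm_incr_dist_large M0 xM tau01 close hs ht).
  by rewrite mulrA.
move=> tsN; apply: le_trans KG _; apply: le_trans (ler_wpM2l K0 _) _.
  exact (hnorm_incr_dist_small M0 xM tau01 close s0 (ltW st) t1 tsN).
rewrite sqrtrM ?mulrA //; exact: exprn_ge0.
Qed.

Theorem mainTheorem20 (R : realType) (d : nat) (p : R) (phi : R -> R) :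
  (2 <= d)%N -> 2 < p < 3 -> Xi p phi ->
  (fun x => Num.sqrt x / phi x) x @[x --> 0^'+] --> 0 ->
  forall n : nat, forall x : R -> T2 R d, C0path x ->
  forall eps : R, 0 < eps -> exists2 del : R, 0 < del &
    forall y : R -> T2 R d, C0path y -> (dinf x y < del%:E)%E ->
      (dphi phi (Ups n x) (Ups n y) < eps%:E)%E.
Proof.
move=> _ /andP[p2 _] Xphi phi_lim n x Cx eps eps0.
have p0 : 0 < p by apply: lt_trans p2.
have phi_gt0 := Xi_gt0 p0 Xphi.
have [A [B [A0 B0 AB]]] := Ups_incr_dist_bounds n Cx.
have N0 : 0 < (2%:R ^+ n : R)^-1 by rewrite invr_gt0 exprn_gt0.
have N1 : (2%:R ^+ n : R)^-1 <= 1 by rewrite invf_le1 ?exprn_gt0 // exprn_ege1 // ler1n.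
have c0 : 0 < eps / (2 * (A + 1)) by rewrite divr_gt0 // mulr_gt0 // ltr_wpDl.
have [eta /andP[eta0 etaN] sqrt_phi] := sqrt_le_near0 phi_gt0 phi_lim c0 N0 N1.
have phi_eta : 0 < phi eta by rewrite phi_gt0 // eta0 (le_trans etaN N1).
pose tau := Num.min 1 (eps / (2 * (B + 1)) * phi eta).
have tau_le : tau <= eps / (2 * (B + 1)) * phi eta by rewrite ge_min lexx orbT.
have tau01 : 0 < tau <= 1.
  rewrite /tau lt_min ge_min lexx ltr01 /= andbT mulr_gt0 //.
  by rewrite divr_gt0 // mulr_gt0 // ltr_wpDl.
have [tau0 _] := andP tau01.
exists (tau ^+ 4 / (2 * d.+1%:R)); first by rewrite divr_gt0 ?exprn_gt0 ?mulr_gt0.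
move=> y Cy dxy; apply: le_lt_trans (dphi_le phi_gt0 (c := eps / 2) _) _; last first.
  by rewrite lte_fin ltr_pdivrMr // ltr_pMr // ltr1n.
move=> s t s0 st t1; have ts : 0 < t - s <= 1 by apply/andP; split; lra.
have phi_ts := ltW (phi_gt0 _ ts).
have [large small] := AB y tau s t Cy tau01 dxy s0 st t1.
have [ts_eta|eta_ts] := leP (t - s) eta.
  apply: le_trans (small (le_trans ts_eta etaN)) _.
  by apply: ler_mul_frac A0 eps0 phi_ts _; apply: sqrt_phi; rewrite ts_eta andbT; case/andP: ts.
apply: le_trans large _; apply: le_trans (ler_mul_frac B0 eps0 (ltW phi_eta) tau_le) _.
rewrite ler_wpM2l ?divr_ge0 ?(ltW eps0) //.
by apply: (Xi_le p0 Xphi) (ltW eta0) (ltW eta_ts) _; case/andP: ts.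
Qed.
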